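(* Let $u\in\Lambda$ with $G^{>}_u\neq\emptyset$. Then there exist $a>0$, $b\in(0,1)$ and $c\in\mathbb R$ such that: (1) $\{k\in\mathbb N: u_k>c\}\neq\emptyset$; (2) $u_k\le ab^k+c$ for all $k\in\mathbb N$; (3) $u_{\mathbf K^s_u}=ab^{\mathbf K^s_u}+c$.
   Context: For a real sequence $u=(u_k)_{k\in\mathbb N}$: $\Lambda$ is the set of real sequences with $\sup_n u_n<+\infty$; $G^{>}_u=\{k\in\mathbb N: u_k>\limsup_{n\to\infty}u_n\}$; $\Delta^s_u=\{k\in\mathbb N:\max_{0\le j\le k}u_j>\sup_{j>k}u_j\}$ and $\mathbf K^s_u=\inf\Delta^s_u$ (with $\inf\emptyset=+\infty$). *)

From Stdlib Require Import Reals.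
From Coquelicot Require Import Coquelicot.
Open Scope R_scope.

Definition in_Lambda (u : nat -> R) : Prop := exists M : R, forall n, u n <= M.

Fixpoint prefix_max (u : nat -> R) (k : nat) : R :=
  match k with
  | O => u O
  | S k' => Rmax (prefix_max u k') (u (S k'))
  end.

Definition tail_sup (u : nat -> R) (k : nat) : Rbar := Sup_seq (fun n => u (n + S k)%nat).

Definition G_gt (u : nat -> R) (k : nat) : Prop := Rbar_lt (LimSup_seq u) (Finite (u k)).

Definition Delta_s (u : nat -> R) (k : nat) : Prop :=
  Rbar_lt (tail_sup u k) (Finite (prefix_max u k)).

(* K is the infimum (= least element) of Delta^s_u, in particular Delta^s_u is nonempty *)
Definition is_Ks (u : nat -> R) (K : nat) : Prop :=
  Delta_s u K /\ forall k, Delta_s u k -> (K <= k)%nat.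

(* Since limsup u is the infimum of the tail suprema, [u k0 > limsup u] makes
   some tail supremum strictly smaller than an earlier term, so Delta^s_u is
   nonempty.  At its least element K the prefix maximum is attained at K itself
   (otherwise K - 1 would already lie in Delta^s_u), so u_K dominates the
   prefix while the whole tail stays below some c < u_K.  The geometric
   sequence a b^k + c through (K, u_K) then majorises u: before K because it
   decreases, after K because it stays above c. *)

From Stdlib Require Import Reals.
From Coquelicot Require Import Coquelicot.
From Stdlib Require Import Lra Lia Wf_nat Classical.
Open Scope R_scope.

Lemma Inf_seq_lt (f : nat -> Rbar) (x : Rbar) :
  Rbar_lt (Inf_seq f) x -> exists n, Rbar_lt (f n) x.
Proof.
  intros Hlt. apply NNPP. intros Hnone.
  destruct (is_inf_seq_glb f _ (Inf_seq_correct f)) as [_ Hglb].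
  assert (Hx : Rbar_le x (Inf_seq f)).
  { apply Hglb. intros y [n ->]. apply Rbar_not_lt_le.
    intros Hn. apply Hnone. now exists n. }
  exact (Rbar_le_not_lt _ _ Hx Hlt).
Qed.

Lemma Sup_seq_le_ub (f : nat -> Rbar) (x : Rbar) :
  (forall n, Rbar_le (f n) x) -> Rbar_le (Sup_seq f) x.
Proof.
  intros Hub. destruct (is_sup_seq_lub f _ (Sup_seq_correct f)) as [_ Hlub].
  apply Hlub. intros y [n ->]. apply Hub.
Qed.

Lemma Sup_seq_ge_term (f : nat -> R) (n : nat) :
  Rbar_le (f n) (Sup_seq (fun m => Finite (f m))).
Proof. apply (Sup_seq_minor_le _ _ n), Rbar_le_refl. Qed.

Lemma Rbar_lt_exists_real (x : Rbar) (y : R) :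
  Rbar_lt x y -> exists c : R, Rbar_lt x c /\ c < y.
Proof.
  destruct x as [x | |]; simpl; intros Hxy; try contradiction.
  - exists ((x + y) / 2). simpl. split; lra.
  - exists (y - 1). simpl. split; [exact I | lra].
Qed.

Lemma prefix_max_ge (u : nat -> R) (j k : nat) :
  (j <= k)%nat -> u j <= prefix_max u k.
Proof.
  induction k as [|k IH]; intros Hjk.
  - replace j with 0%nat by lia. simpl. lra.
  - simpl. destruct (Nat.eq_dec j (S k)) as [-> | Hne].
    + apply Rmax_r.
    + apply Rle_trans with (prefix_max u k); [apply IH; lia | apply Rmax_l].
Qed.

Lemma tail_sup_ge (u : nat -> R) (K k : nat) :
  (K < k)%nat -> Rbar_le (u k) (tail_sup u K).
Proof.
  intros HKk. unfold tail_sup.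
  replace k with ((k - S K) + S K)%nat at 1 by lia.
  apply (Sup_seq_ge_term (fun n => u (n + S K)%nat)).
Qed.

Lemma tail_sup_lt_S (u : nat -> R) (K : nat) (x : R) :
  u (S K) < x -> Rbar_lt (tail_sup u (S K)) x -> Rbar_lt (tail_sup u K) x.
Proof.
  intros Hu Htail.
  destruct (Rbar_lt_exists_real _ _ Htail) as [c [Htc Hcx]].
  apply Rbar_le_lt_trans with (Finite (Rmax (u (S K)) c)).
  2: { simpl. apply Rmax_lub_lt; lra. }
  apply Sup_seq_le_ub. intros [|n]; simpl.
  - apply Rmax_l.
  - apply Rle_trans with c; [| apply Rmax_r].
    assert (Hn : Rbar_le (u (S n + S K)%nat) (tail_sup u (S K)))
      by (apply tail_sup_ge; lia).
    left. exact (Rbar_le_lt_trans _ _ _ Hn Htc).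
Qed.

Lemma Delta_s_of_G_gt (u : nat -> R) (k0 : nat) :
  G_gt u k0 -> exists k, Delta_s u k.
Proof.
  unfold G_gt. rewrite LimSup_InfSup_seq. intros HG.
  destruct (Inf_seq_lt _ _ HG) as [m Hm].
  exists (m + k0)%nat. unfold Delta_s, tail_sup.
  apply Rbar_le_lt_trans with (Sup_seq (fun n => Finite (u (n + m)%nat))).
  - apply Sup_seq_le_ub. intros n.
    replace (n + S (m + k0))%nat with ((n + S k0) + m)%nat by lia.
    apply (Sup_seq_ge_term (fun n => u (n + m)%nat)).
  - eapply Rbar_lt_le_trans; [exact Hm |]. simpl. apply prefix_max_ge. lia.
Qed.

Lemma Ks_exists (u : nat -> R) : (exists k, Delta_s u k) -> exists K, is_Ks u K.
Proof.
  intros HD.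
  destruct (dec_inh_nat_subset_has_unique_least_element
              (Delta_s u) (fun n => classic _) HD) as [K [HK _]].
  now exists K.
Qed.

Lemma prefix_max_Ks (u : nat -> R) (K : nat) : is_Ks u K -> prefix_max u K = u K.
Proof.
  intros [HK Hleast]. destruct K as [|K]; [reflexivity |]. simpl.
  destruct (Rle_lt_dec (prefix_max u K) (u (S K))) as [Hle | Hlt].
  - now apply Rmax_right.
  - exfalso.
    assert (HDK : Delta_s u K).
    { unfold Delta_s in *. simpl prefix_max in HK.
      rewrite Rmax_left in HK by lra.
      now apply tail_sup_lt_S. }
    specialize (Hleast K HDK). lia.
Qed.

Lemma geometric_majorant (u : nat -> R) (K : nat) (b c : R) :
  0 < b <= 1 -> c < u K ->
  (forall k, (k <= K)%nat -> u k <= u K) ->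
  (forall k, (K < k)%nat -> u k < c) ->
  exists a, 0 < a /\ (forall k, u k <= a * b ^ k + c) /\ u K = a * b ^ K + c.
Proof.
  intros Hb HcK Hhead Htail.
  assert (HbK : 0 < b ^ K) by (apply pow_lt; lra).
  exists ((u K - c) / b ^ K).
  assert (Ha : 0 < (u K - c) / b ^ K) by (apply Rdiv_lt_0_compat; lra).
  assert (Heq : u K = (u K - c) / b ^ K * b ^ K + c) by (field; lra).
  split; [exact Ha |]. split; [| exact Heq].
  intros k. destruct (Compare_dec.le_lt_dec k K) as [Hk | Hk].
  - assert (Hpow : b ^ K <= b ^ k).
    { replace K with (k + (K - k))%nat by lia. rewrite pow_add.
      assert (0 < b ^ k) by (apply pow_lt; lra).
      assert (b ^ (K - k) <= 1) by (rewrite <- (pow1 (K - k)); apply pow_incr; lra).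
      nra. }
    specialize (Hhead k Hk).
    assert ((u K - c) / b ^ K * b ^ K <= (u K - c) / b ^ K * b ^ k)
      by (apply Rmult_le_compat_l; lra).
    lra.
  - assert (0 < (u K - c) / b ^ K * b ^ k)
      by (apply Rmult_lt_0_compat; [exact Ha | apply pow_lt; lra]).
    specialize (Htail k Hk). lra.
Qed.

Theorem mainTheorem3 (u : nat -> R) :
  in_Lambda u ->
  (exists k, G_gt u k) ->
  exists a b c : R,
    0 < a /\ 0 < b < 1 /\
    (exists k, u k > c) /\
    (forall k, u k <= a * b ^ k + c) /\
    (exists K, is_Ks u K /\ u K = a * b ^ K + c).
Proof.
  intros _ [k0 HG].
  destruct (Ks_exists u (Delta_s_of_G_gt u k0 HG)) as [K HK].
  pose proof (prefix_max_Ks u K HK) as HuK.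
  assert (HDK : Rbar_lt (tail_sup u K) (u K)) by (rewrite <- HuK; apply HK).
  destruct (Rbar_lt_exists_real _ _ HDK) as [c [Htc HcK]].
  destruct (geometric_majorant u K (/ 2) c) as [a [Ha [Hmaj Heq]]].
  - lra.
  - exact HcK.
  - intros k Hk. rewrite <- HuK. now apply prefix_max_ge.
  - intros k Hk. apply (Rbar_le_lt_trans _ _ _ (tail_sup_ge u K k Hk) Htc).
  - exists a, (/ 2), c. repeat split; try lra.
    + exists K. lra.
    + exact Hmaj.
    + now exists K.
Qed.
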